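(* Let $F_0,F_1$ be distribution functions of real random variables $Y_0,Y_1$ and $\alpha\in(0,1)$. If $$1+\inf_{y\in\mathbb{R}}\min\{F_1(y)-P(Y_0<y),\,0\}>\alpha,$$ then every interval $I$ such that $P(Y_1-Y_0\in I)\ge1-\alpha$ for every joint distribution of $(Y_0,Y_1)$ with marginals $F_0,F_1$ satisfies $I\cap(-\infty,0]\neq\emptyset$ (i.e. the left endpoint of $I$ cannot be strictly positive).
   Context: $Y_0,Y_1$ are potential outcomes with known marginal cdfs $F_0,F_1$ and unknown joint distribution; $\mathrm{ITE}=Y_1-Y_0$. The quantity $1+\inf_y\min\{F_1(y)-P(Y_0<y),0\}$ is the sharp upper bound on $P(Y_1-Y_0\le0)$ over all joint distributions with these marginals. *)

From HB Require Import structures.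
From mathcomp Require Import all_boot all_order all_algebra.
From mathcomp Require Import all_classical all_reals all_analysis.
Set Implicit Arguments. Unset Strict Implicit. Unset Printing Implicit Defensive.
Import Order.TTheory GRing.Theory Num.Theory.
Local Open Scope classical_set_scope.
Local Open Scope ring_scope.

Definition cdf (R : realType) (mu : probability R R) (y : R) : R :=
  fine (mu `]-oo, y]%classic).

Definition cdf_lt (R : realType) (mu : probability R R) (y : R) : R :=
  fine (mu `]-oo, y[%classic).

Definition is_coupling (R : realType) (mu0 mu1 : probability R R)
  (pi : probability (R * R)%type R) : Prop :=
  (forall A : set R, measurable A -> pi (fst @^-1` A) = mu0 A) /\
  (forall A : set R, measurable A -> pi (snd @^-1` A) = mu1 A).

Definition ite_upper (R : realType) (mu0 mu1 : probability R R) : R :=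
  1 + inf [set Num.min (cdf mu1 y - cdf_lt mu0 y) 0 | y in [set: R]].

From Pilot Require Import Defs.
From HB Require Import structures.
From mathcomp Require Import all_boot all_order all_algebra.
From mathcomp Require Import all_classical all_reals all_analysis.
From mathcomp Require Import lra.
Import Order.TTheory GRing.Theory Num.Theory.
Import numFieldNormedType.Exports.
Local Open Scope classical_set_scope.
Local Open Scope ring_scope.
Set Implicit Arguments. Unset Strict Implicit. Unset Printing Implicit Defensive.

(* Put c := 1 - ite_upper mu0 mu1, so that 0 <= c < 1 - alpha and
   P(Y0 < y) - c <= F1(y) for all y.  With U uniform on ]0, 1[, the quantile
   coupling Y1 := F1^-1(U), Y0 := F0^-1(U + c mod 1) has the right marginals,
   since rotating ]0, 1[ by c preserves the uniform law, and it satisfies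
   Y1 <= Y0 whenever U < 1 - c.  Hence P(Y1 - Y0 > 0) <= c < 1 - alpha, so an
   interval I inside ]0, +oo[ violates the coverage hypothesis. *)

Section uniform.
Context {R : realType}.

Definition unif01 (A : set R) : \bar R :=
  mrestr (@lebesgue_measure R) (measurable_itv `]0, 1[) A.

Let unif01_0 : unif01 set0 = 0%E.
Proof. exact: measure0. Qed.

Let unif01_ge0 A : (0 <= unif01 A)%E.
Proof. exact: measure_ge0. Qed.

Let unif01_sigma_additive : semi_sigma_additive unif01.
Proof. exact: (@measure_semi_sigma_additive _ _ _
  (mrestr (@lebesgue_measure R) (measurable_itv `]0, 1[))). Qed.

HB.instance Definition _ :=
  isMeasure.Build _ _ _ unif01 unif01_0 unif01_ge0 unif01_sigma_additive.

Let unif01_setT : unif01 setT = 1%E.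
Proof. by rewrite /unif01 /mrestr setTI lebesgue_measure_itv/= lte01 sube0. Qed.

HB.instance Definition _ := Measure_isProbability.Build _ _ _ unif01 unif01_setT.

Lemma unif01E A : unif01 A = lebesgue_measure (A `&` `]0, 1[).
Proof. by []. Qed.

Lemma unif01_preimage_eq (f g : R -> R) (A : set R) :
  {in `]0, 1[, f =1 g} -> unif01 (f @^-1` A) = unif01 (g @^-1` A).
Proof.
move=> fg; rewrite !unif01E; congr (lebesgue_measure _).
by apply/seteqP; split=> u [Au u01]; split=> //=; rewrite ?fg// -fg.
Qed.

Lemma lebesgue_measure_sandwich (S : set R) (s t : R) : measurable S -> s <= t ->
  `]s, t[ `<=` S -> S `<=` `[s, t] -> lebesgue_measure S = (t - s)%:E.
Proof.
move=> mS st sub_S S_sub.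
have itv_ts b1 b2 : lebesgue_measure [set` Interval (BSide b1 s) (BSide b2 t)]
    = (t - s)%:E.
  by rewrite lebesgue_measure_itv/= lte_fin; case: ltgtP st => // ->; rewrite subrr.
apply/eqP; rewrite eq_le; apply/andP; split.
  by rewrite -(itv_ts true false); apply: le_measure; rewrite ?inE.
by rewrite -(itv_ts false true); apply: le_measure; rewrite ?inE.
Qed.

Lemma probability_eq_cdf (P Q : probability R R) :
  (forall y, P `]-oo, y]%classic = Q `]-oo, y]%classic) ->
  forall A, measurable A -> P A = Q A.
Proof.
move=> PQ; apply: (@measure_unique _ _ _ (@measurable_realfun.RGenOInfty.G R)
   (fun k => `]-(k%:R), +oo[%classic)).
- exact: measurable_realfun.RGenOInfty.measurableE.
- move=> _ _ [a ->] [b ->]; exists (Num.max a b).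
  by apply/seteqP; split=> x /=; rewrite !in_itv/= !andbT gt_max;
    [move=> [-> ->] | move/andP].
- by move=> k; exists (- k%:R).
- apply/seteqP; split=> // x _; exists (Num.Def.archi_bound x) => //=.
  by rewrite in_itv/= andbT ltrNl; exact: unstable.ltrNbound.
- move=> _ [x ->]; rewrite -setCitvl.
  transitivity (1 - P `]-oo, x]%classic)%E; first exact: probability_setC.
  by rewrite PQ; symmetry; exact: probability_setC.
- by move=> k; rewrite (le_lt_trans (probability_le1 _ _))// ltry.
Qed.

Definition rotate (c u : R) : R := if u < 1 - c then u + c else u - (1 - c).

Lemma rotate_lt (c u : R) : u < 1 - c -> rotate c u = u + c.
Proof. by rewrite /rotate => ->. Qed.

Lemma rotate_ge (c u : R) : 1 - c <= u -> rotate c u = u - (1 - c).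
Proof. by rewrite /rotate ltNge => ->. Qed.

Lemma rotate_lt1 (c u : R) : c <= 1 -> u < 1 -> rotate c u < 1.
Proof. by move=> c1 u1; rewrite /rotate; case: (ltP u (1 - c)) => h; lra. Qed.

Lemma measurable_rotate (c : R) : measurable_fun setT (rotate c).
Proof.
apply: measurable_fun_if => //.
- by apply: measurable_realfun.measurable_fun_ltr => //; exact: measurable_cst.
- apply: measurable_funTS.
  by apply: measurable_realfun.measurable_funD => //; exact: measurable_cst.
- apply: measurable_funTS.
  by apply: measurable_realfun.measurable_funB => //; exact: measurable_cst.
Qed.

HB.instance Definition _ (c : R) :=
  isMeasurableFun.Build _ _ _ _ (rotate c) (measurable_rotate c).

Section rotate_sublevel.
Variables (c t : R) (S : set R).
Hypotheses (mS : measurable S) (S01 : S `<=` `]0, 1[%classic).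
(* Nothing is assumed at u = 1 - c, where rotate c u = 0: a null set. *)
Hypothesis S_rotate :
  forall u : R, 0 < u < 1 -> 0 < rotate c u -> S u <-> rotate c u <= t.

Let mSitv (i : interval R) : measurable (S `&` [set` i]).
Proof. exact: measurableI. Qed.

Let S_in01 u : S u -> 0 < u < 1.
Proof. by move/S01; rewrite /= in_itv. Qed.

Let S_below : 0 <= c -> t <= 1 ->
  lebesgue_measure (S `&` `]-oo, 1 - c[) = (Num.max 0 (t - c) - 0)%:E.
Proof.
move=> c0 t1.
apply: lebesgue_measure_sandwich => //; first by rewrite le_max lexx.
- move=> u /=; rewrite !in_itv/= lt_max => /andP[u0 /orP[u_neg|ut]]; first lra.
  have uc : u < 1 - c by lra.
  have u01 : 0 < u < 1 by apply/andP; split; lra.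
  have pos : 0 < rotate c u by rewrite rotate_lt//; lra.
  by split; [apply/(S_rotate u01 pos).2; rewrite rotate_lt//; lra | rewrite /= ?in_itv/=].
- move=> u /= [Su]; rewrite !in_itv/= => uc.
  have /andP[u0 u1] := S_in01 Su.
  have pos : 0 < rotate c u by rewrite rotate_lt//; lra.
  have := (S_rotate (S_in01 Su) pos).1 Su; rewrite rotate_lt// => ut.
  by rewrite ltW//= le_max; apply/orP; right; lra.
Qed.

Let S_above : 0 <= c -> c <= 1 -> 0 <= t ->
  lebesgue_measure (S `&` `[1 - c, +oo[) = (Num.min 1 (1 - c + t) - (1 - c))%:E.
Proof.
move=> c0 c1 t0.
apply: lebesgue_measure_sandwich => //; first by rewrite le_min; apply/andP; split; lra.
- move=> u /=; rewrite !in_itv/= lt_min => /andP[cu /andP[u1 ut]].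
  have u01 : 0 < u < 1 by apply/andP; split; lra.
  have pos : 0 < rotate c u by rewrite rotate_ge; lra.
  split; last by rewrite /= ?in_itv/= ?andbT ltW.
  by apply/(S_rotate u01 pos).2; rewrite rotate_ge; lra.
- move=> u /= [Su]; rewrite !in_itv/= andbT => cu.
  have /andP[u0 u1] := S_in01 Su.
  rewrite cu le_min /=; apply/andP; split; first lra.
  have [<-|cu'] := eqVneq (1 - c) u; first lra.
  have cu_lt : 1 - c < u by rewrite lt_neqAle cu' cu.
  have pos : 0 < rotate c u by rewrite rotate_ge//; lra.
  by have := (S_rotate (S_in01 Su) pos).1 Su; rewrite rotate_ge//; lra.
Qed.

Lemma lebesgue_rotate_sublevel : 0 <= c -> c <= 1 -> 0 <= t -> t <= 1 ->
  lebesgue_measure S = t%:E.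
Proof.
move=> c0 c1 t0 t1.
have -> : S = (S `&` `]-oo, 1 - c[) `|` (S `&` `[1 - c, +oo[).
  by rewrite -setIUr -setCitvr setUCl setIT.
rewrite measureU; [| exact: measurableI | exact: measurableI |]; last first.
  by rewrite setIACA -setCitvr setICl setI0.
rewrite [_ (S `&` `]-oo, _[)]S_below // [_ (S `&` `[_, +oo[)]S_above // -EFinD.
congr (_%:E).
have [ct|tc] := leP c t.
  by rewrite (max_idPr _) ?(min_idPl _); lra.
by rewrite (max_idPl _) ?(min_idPr _); lra.
Qed.

End rotate_sublevel.

End uniform.

Section quantile.
Context {R : realType} (mu : probability R R).

Lemma cdfE y : mu `]-oo, y]%classic = (Defs.cdf mu y)%:E.
Proof. by rewrite /Defs.cdf fineK// fin_num_measure. Qed.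

Lemma cdf_ge0 y : 0 <= Defs.cdf mu y.
Proof. by rewrite /Defs.cdf fine_ge0. Qed.

Lemma cdf_le1 y : Defs.cdf mu y <= 1.
Proof. by rewrite -lee_fin -cdfE probability_le1. Qed.

Lemma le_cdf x y : x <= y -> Defs.cdf mu x <= Defs.cdf mu y.
Proof.
move=> xy; rewrite -lee_fin -!cdfE; apply: le_measure; rewrite ?inE//.
by apply: subitvPr; rewrite bnd_simp.
Qed.

Lemma cdf_le_cdf_lt x y : x < y -> Defs.cdf mu x <= Defs.cdf_lt mu y.
Proof.
move=> xy; rewrite /Defs.cdf /Defs.cdf_lt fine_le ?fin_num_measure//.
apply: le_measure; rewrite ?inE//.
by move=> z /=; rewrite !in_itv/= => /le_lt_trans; apply.
Qed.

Lemma cdf_lt_le1 y : Defs.cdf_lt mu y <= 1.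
Proof.
by rewrite /Defs.cdf_lt -lee_fin fineK ?fin_num_measure// probability_le1.
Qed.

Let idTR : R -> R := idfun.
#[local] HB.instance Definition _ :=
  @isMeasurableFun.Build _ _ _ _ idTR (@measurable_id _ _ setT).

Let cdf_idTR : random_variable.cdf (idTR : {RV mu >-> R}) = (fun y => (Defs.cdf mu y)%:E).
Proof.
apply/funext => y.
by rewrite /random_variable.cdf /distribution /pushforward preimage_id cdfE.
Qed.

Lemma cdf_right_cont y : Defs.cdf mu x @[x --> y^'+] --> Defs.cdf mu y.
Proof.
by have := @cdf_right_continuous _ _ _ mu idTR y; rewrite cdf_idTR => /fine_cvg.
Qed.

Lemma cvg_cdf_y1 : Defs.cdf mu x @[x --> +oo] --> (1 : R).
Proof. by have := @cvg_cdfy1 _ _ _ mu idTR; rewrite cdf_idTR => /fine_cvg. Qed.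

Lemma cvg_cdf_Ny0 : Defs.cdf mu x @[x --> -oo] --> (0 : R).
Proof. by have := @cvg_cdfNy0 _ _ _ mu idTR; rewrite cdf_idTR => /fine_cvg. Qed.

Lemma cdf_ge_right y u : (forall z, y < z -> u <= Defs.cdf mu z) -> u <= Defs.cdf mu y.
Proof.
move=> yu; rewrite leNgt; apply/negP => Fyu.
have : \forall z \near y^'+, y < z /\ Defs.cdf mu z < u.
  near=> z; split; last by near: z; apply: (cvgr_lt _ (@cdf_right_cont y) _ Fyu).
  by near: z; exact: nbhs_right_gt.
by move=> /filter_ex [z [/yu]]; rewrite leNgt => /negP.
Unshelve. all: by end_near. Qed.

(* Junk value 0 outside ]0, 1[, where the infimum below need not exist. *)
Definition quantile (u : R) : R :=
  if 0 < u < 1 then inf [set y | u <= Defs.cdf mu y] else 0.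

Lemma quantile_le u y : 0 < u < 1 -> (quantile u <= y) = (u <= Defs.cdf mu y).
Proof.
move=> u01; rewrite /quantile u01; have /andP[u0 u1] := u01.
set S := [set y | u <= Defs.cdf mu y].
have S0 : S !=set0.
  have [M [_ HM]] := cvgr_gt _ cvg_cdf_y1 _ u1.
  by exists (M + 1); apply/ltW/HM; rewrite ltrDl.
have lS : has_lbound S.
  have [M [_ HM]] := cvgr_lt _ cvg_cdf_Ny0 _ u0.
  exists (M - 1) => z Sz; rewrite leNgt; apply/negP => zM.
  have : Defs.cdf mu z < u by apply: HM; lra.
  by rewrite ltNge Sz.
apply/idP/idP => [qy|]; last exact: ge_inf.
apply: cdf_ge_right => z yz.
have [w Sw wz] := inf_lt S0 (le_lt_trans qy yz).
exact: le_trans Sw (le_cdf (ltW wz)).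
Qed.

Lemma measurable_quantile : measurable_fun setT quantile.
Proof.
apply: (measurability (@measurable_realfun.RGenOInfty.G R)).
  exact: measurable_realfun.RGenOInfty.measurableE.
move=> _ [_ [x ->] <-].
have -> : [set: R] `&` quantile @^-1` `]x, +oo[ =
   (`]0, 1[ `&` `]Defs.cdf mu x, +oo[) `|` (~` `]0, 1[ `&` [set _ | x < 0]).
  apply/seteqP; split => u /=; rewrite !in_itv/= !andbT.
    move=> [_]; have [u01 | u01] := boolP (0 < u < 1).
      by rewrite ltNge quantile_le// -ltNge; left.
    by rewrite /quantile (negbTE u01); right.
  move=> [[u01 Fu]|[u01 x0]]; split => //.
    by rewrite ltNge quantile_le// -ltNge.
  by rewrite /quantile; move/negP/negbTE: u01 => ->.
apply: measurableU; apply: measurableI => //; first exact: measurableC.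
have [x0|x0] := ltP x 0.
  by rewrite (_ : [set _ | _] = setT) //; apply/seteqP; split => // u _.
by rewrite (_ : [set _ | _] = set0) //; apply/seteqP; split => // u /=; rewrite ltNge x0.
Qed.

HB.instance Definition _ := isMeasurableFun.Build _ _ _ _ quantile measurable_quantile.

Lemma quantile_rotate_law (c : R) (A : set R) : 0 <= c -> c <= 1 -> measurable A ->
  unif01 ((quantile \o rotate c) @^-1` A) = mu A.
Proof.
move=> c0 c1.
apply: (probability_eq_cdf (P := distribution unif01 (quantile \o rotate c))).
move=> y; rewrite cdfE.
transitivity (lebesgue_measure
  ((quantile \o rotate c) @^-1` `]-oo, y] `&` `]0, 1[)); first by [].
apply: (lebesgue_rotate_sublevel (c := c)); rewrite ?cdf_ge0 ?cdf_le1 //.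
- apply: measurableI => //; rewrite -[X in measurable X]setTI.
  exact: (measurableT_comp measurable_quantile (measurable_rotate c)).
- move=> u /andP[u0 u1] pos.
  have rot01 : 0 < rotate c u < 1 by rewrite pos rotate_lt1.
  rewrite -(quantile_le _ rot01); split => [[/= qy _] | qy].
    by rewrite in_itv/= in qy.
  by split; rewrite /= in_itv/= ?u0.
Qed.

Lemma quantile_law A : measurable A -> unif01 (quantile @^-1` A) = mu A.
Proof.
move=> mA; rewrite (@unif01_preimage_eq _ quantile (quantile \o rotate 0)).
  exact: quantile_rotate_law.
by move=> u; rewrite in_itv/= => /andP[_ u1] /=; rewrite rotate_lt ?addr0// subr0.
Qed.

End quantile.

Section rotation_coupling.
Context {R : realType} (mu0 mu1 : probability R R).

Lemma quantile_le_shift (c u : R) : (forall z, Defs.cdf_lt mu0 z - c <= Defs.cdf mu1 z) ->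
  0 <= c -> 0 < u -> u < 1 - c -> quantile mu1 u <= quantile mu0 (u + c).
Proof.
move=> dom c0 u0 uc.
have uc01 : 0 < u + c < 1 by apply/andP; split; lra.
rewrite quantile_le; last by apply/andP; split; lra.
apply: cdf_ge_right => z qz.
have : u + c <= Defs.cdf mu0 (quantile mu0 (u + c)) by rewrite -quantile_le.
by have := cdf_le_cdf_lt mu0 qz; have := dom z; lra.
Qed.

Definition rotation_pair (c u : R) : R * R := (quantile mu0 (rotate c u), quantile mu1 u).

Lemma measurable_rotation_pair (c : R) : measurable_fun setT (rotation_pair c).
Proof.
apply: measurable_fun_pair; last exact: measurable_quantile.
exact: measurableT_comp (measurable_quantile _) (measurable_rotate c).
Qed.

HB.instance Definition _ (c : R) :=
  isMeasurableFun.Build _ _ _ _ (rotation_pair c) (measurable_rotation_pair c).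

Definition rotation_coupling (c : R) : probability (R * R)%type R :=
  distribution unif01 (rotation_pair c).

Lemma is_coupling_rotation (c : R) : 0 <= c -> c <= 1 ->
  Defs.is_coupling mu0 mu1 (rotation_coupling c).
Proof.
by move=> c0 c1; split=> A mA; [exact: quantile_rotate_law | exact: quantile_law].
Qed.

Lemma rotation_coupling_lt (c : R) (A : set (R * R)) : 0 <= c ->
  (forall z, Defs.cdf_lt mu0 z - c <= Defs.cdf mu1 z) ->
  measurable A -> A `<=` [set z | z.1 < z.2] ->
  (rotation_coupling c A <= c%:E)%E.
Proof.
move=> c0 dom mA A_lt.
rewrite -[rotation_coupling c A]/(lebesgue_measure (rotation_pair c @^-1` A `&` `]0, 1[)).
apply: (@le_trans _ _ (lebesgue_measure `[1 - c, 1]%classic)); last first.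
  by rewrite lebesgue_measure_itv/= lte_fin; case: ifPn; rewrite lee_fin; lra.
apply: le_measure; rewrite ?inE//.
  apply: measurableI => //; rewrite -[X in measurable X]setTI.
  exact: measurable_rotation_pair.
move=> u [/A_lt/= lt_u]; rewrite /= !in_itv/= => /andP[u0 u1]; rewrite (ltW u1) andbT.
rewrite leNgt; apply/negP => uc; move: lt_u; rewrite rotate_lt// ltNge.
by rewrite quantile_le_shift.
Qed.

End rotation_coupling.

Section ite_upper.
Context {R : realType} (mu0 mu1 : probability R R).

Let gaps := [set Num.min (Defs.cdf mu1 y - Defs.cdf_lt mu0 y) 0 | y in [set: R]].

Let inf_gaps_le y : inf gaps <= Num.min (Defs.cdf mu1 y - Defs.cdf_lt mu0 y) 0.
Proof.
apply: ge_inf; last by exists y.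
exists (-1) => _ [z _ <-]; rewrite le_min; apply/andP; split; last lra.
by have := cdf_ge0 mu1 z; have := cdf_lt_le1 mu0 z; lra.
Qed.

Lemma ite_upper_le1 : Defs.ite_upper mu0 mu1 <= 1.
Proof. by have := inf_gaps_le 0; rewrite le_min /Defs.ite_upper => /andP[_]; lra. Qed.

Lemma cdf_lt_sub_ite_upper z :
  Defs.cdf_lt mu0 z - (1 - Defs.ite_upper mu0 mu1) <= Defs.cdf mu1 z.
Proof. by have := inf_gaps_le z; rewrite le_min /Defs.ite_upper => /andP[]; lra. Qed.

End ite_upper.

Theorem mainTheorem12 (R : realType) (mu0 mu1 : probability R R) (alpha : R)
  (I : interval R) :
  0 < alpha < 1 ->
  alpha < ite_upper mu0 mu1 ->
  (forall pi : probability (R * R)%type R, is_coupling mu0 mu1 pi ->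
     ((1 - alpha)%:E <= pi [set z : R * R | (z.2 - z.1)%R \in I])%E) ->
  exists x : R, x \in I /\ x <= 0.
Proof.
move=> /andP[a0 a1] alpha_lt I_large; apply: contrapT => I_pos.
have c0 : 0 <= 1 - ite_upper mu0 mu1 by have := ite_upper_le1 mu0 mu1; lra.
set c := 1 - ite_upper mu0 mu1 in c0 *.
have c1 : c <= 1 by rewrite /c; lra.
have mI : measurable [set z : R * R | (z.2 - z.1)%R \in I].
  rewrite -[X in measurable X]setTI.
  exact: (measurable_realfun.measurable_funB measurable_snd measurable_fst
    measurableT (measurable_itv I)).
have mass_le_c :
    (rotation_coupling mu0 mu1 c [set z | (z.2 - z.1)%R \in I] <= c%:E)%E.
  apply: rotation_coupling_lt => // [z | z /= zI]; first exact: cdf_lt_sub_ite_upper.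
  by rewrite -subr_gt0 ltNge; apply/negP => z0; apply: I_pos; exists (z.2 - z.1).
have := le_trans (I_large _ (is_coupling_rotation mu0 mu1 c0 c1)) mass_le_c.
by rewrite lee_fin /c; lra.
Qed.
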